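(* Let $a\neq b$ be decimal digits and $n\ge 2$, and suppose $B_n(a,b)$ is an absolute prime. Let $p$ be a prime such that $n>p-1$, $10$ is a primitive root modulo $p$ (i.e. $h(p)=p-1$), and $\gcd(a,p)=1$. Then $(p-1)\mid n$.
   Context: For a positive integer $N$ with decimal representation $d_1d_2\dots d_n$ (digits $d_k\in\{0,\dots,9\}$, $d_1\neq 0$), a permutation of the digits of $N$ is any integer $\sum_{k=1}^{n} d_{\sigma(k)}10^{n-k}$ with $\sigma$ a permutation of $\{1,\dots,n\}$. $N$ is called an absolute prime if every integer obtained by a permutation of the digits of $N$ (including $N$ itself) is prime. The repunit $A_n=(10^n-1)/9$ is the $n$-digit integer all of whose digits are $1$. For digits $a,b$ and $n\ge 1$, $B_n(a,b)=a\cdot A_n+(b-a)$ is the $n$-digit integer whose first $n-1$ digits are $a$ and whose last digit is $b$. For a prime $p\notin\{2,5\}$, $h(p)$ denotes the multiplicative order of $10$ modulo $p$; $10$ is a primitive root modulo $p$ when $h(p)=p-1$. *)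

From mathcomp Require Import all_boot.
Set Implicit Arguments. Unset Strict Implicit. Unset Printing Implicit Defensive.

(* Integer with decimal digit list s (most significant first): sum_k s_k 10^(n-k). *)
Definition fromdigits (s : seq nat) : nat := foldl (fun acc d => acc * 10 + d) 0 s.

Definition decimal_rep (N : nat) (s : seq nat) : Prop :=
  [/\ all (fun d => d < 10) s, head 0 s != 0 & fromdigits s = N].

Definition absolute_prime (N : nat) : Prop :=
  exists s, decimal_rep N s /\ forall t, perm_eq t s -> prime (fromdigits t).

Definition repunit (n : nat) : nat := (10 ^ n - 1) %/ 9.

(* B_n(a,b) = a*A_n + (b - a): first n-1 digits a, last digit b (n >= 1). *)
Definition B (n a b : nat) : nat := a * repunit n + b - a.

Definition is_order10 (p h : nat) : Prop :=
  [/\ 0 < h, 10 ^ h %% p = 1 %% p & forall k, 0 < k < h -> 10 ^ k %% p != 1 %% p].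

From mathcomp Require Import all_boot all_algebra finfield zify ring.

Set Implicit Arguments.
Unset Strict Implicit.
Unset Printing Implicit Defensive.

(* Write
   V_k = a A_n + (b - a) 10^k for the digit permutation of B_n(a,b) in which b
   is followed by k digits a.  If (p-1) does not divide n, then 10^n <> 1 mod p,
   so A_n = (10^n - 1)/9 is nonzero mod p; and b <> a mod p (both digits are
   odd, being last digits of primes, which handles p = 7).  As 10 generates
   (Z/p)^*, some k < p - 1 <= n - 1 solves 10^k = -a A_n / (b - a) mod p, so
   p divides the prime V_k, hence p = V_k >= 10^(n-1) > n >= p: contradiction. *)

Lemma foldl_digitsE (s : seq nat) (z : nat) :
  foldl (fun acc d => acc * 10 + d) z s = z * 10 ^ size s + fromdigits s.
Proof.
elim: s z => [|x s IH] z /=; first by rewrite /fromdigits /= muln1 addn0.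
by rewrite /fromdigits /= IH -/(fromdigits s) IH expnS; lia.
Qed.

Lemma fromdigits_cat (s t : seq nat) :
  fromdigits (s ++ t) = fromdigits s * 10 ^ size t + fromdigits t.
Proof. by rewrite /fromdigits foldl_cat foldl_digitsE. Qed.

Lemma fromdigits_cons (x : nat) (s : seq nat) :
  fromdigits (x :: s) = x * 10 ^ size s + fromdigits s.
Proof. by rewrite -cat1s fromdigits_cat /fromdigits /= add0n. Qed.

Lemma fromdigits_rcons (s : seq nat) (x : nat) :
  fromdigits (rcons s x) = fromdigits s * 10 + x.
Proof. by rewrite /fromdigits foldl_rcons. Qed.

Lemma ones_digits9 (k : nat) : 9 * fromdigits (nseq k 1) + 1 = 10 ^ k.
Proof. by elim: k => [|k IH] //=; rewrite fromdigits_cons size_nseq expnS; lia. Qed.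

Lemma repunit_digits (k : nat) : repunit k = fromdigits (nseq k 1).
Proof. by rewrite /repunit -ones_digits9 addnK mulKn. Qed.

Lemma repunit9 (k : nat) : 9 * repunit k + 1 = 10 ^ k.
Proof. by rewrite repunit_digits ones_digits9. Qed.

Lemma fromdigits_nseq (k d : nat) : fromdigits (nseq k d) = d * repunit k.
Proof.
rewrite repunit_digits; elim: k => [|k IH] /=; first by rewrite muln0.
by rewrite !fromdigits_cons !size_nseq IH; lia.
Qed.

Lemma repunit1 : repunit 1 = 1.
Proof. by []. Qed.

Lemma repunitD (m j : nat) : repunit (m + j) = repunit m * 10 ^ j + repunit j.
Proof. by rewrite !repunit_digits nseqD fromdigits_cat size_nseq. Qed.

Lemma repunitS (k : nat) : repunit k.+1 = 10 ^ k + repunit k.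
Proof. by rewrite -add1n repunitD repunit1 mul1n. Qed.

Lemma fromdigits_lt (s : seq nat) :
  all (fun d => d < 10) s -> fromdigits s < 10 ^ size s.
Proof.
elim/last_ind: s => [|s x IH] //.
rewrite all_rcons fromdigits_rcons size_rcons expnS => /andP [hx /IH hs]; lia.
Qed.

Lemma decimal_rep_bounds (N : nat) (s : seq nat) :
  decimal_rep N s -> 10 ^ (size s).-1 <= N < 10 ^ size s.
Proof.
case=> digs lead <-; rewrite fromdigits_lt // andbT.
by case: s lead {digs} => [|x s] //= x0; rewrite fromdigits_cons; nia.
Qed.

Lemma fromdigits_inj (s t : seq nat) :
  all (fun d => d < 10) s -> all (fun d => d < 10) t ->
  size s = size t -> fromdigits s = fromdigits t -> s = t.
Proof.
elim/last_ind: s t => [|s x IH] t; first by case: t.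
case/lastP: t => [|t y]; first by rewrite size_rcons.
rewrite !all_rcons !fromdigits_rcons !size_rcons => /andP [hx hs] /andP [hy ht] [hsz] e.
have -> : x = y by lia.
by rewrite (IH t hs ht hsz); last lia.
Qed.

Lemma decimal_rep_uniq (N : nat) (s t : seq nat) :
  decimal_rep N s -> decimal_rep N t -> s = t.
Proof.
move=> rs rt; have [ls us] := andP (decimal_rep_bounds rs).
have [lt ut] := andP (decimal_rep_bounds rt).
have st : (size s).-1 < size t by rewrite -(ltn_exp2l _ _ (isT : 1 < 10)) (leq_ltn_trans ls).
have ts : (size t).-1 < size s by rewrite -(ltn_exp2l _ _ (isT : 1 < 10)) (leq_ltn_trans lt).
case: rs rt => [ds hs es] [dt ht et]; apply: fromdigits_inj => //; last by rewrite es et.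
by case: s t {ls us lt ut ds es dt et} hs ht st ts => [|x s] [|y t] //= _ _; lia.
Qed.

Lemma decimal_rep_B (n a b : nat) :
  0 < a < 10 -> b < 10 -> 1 < n -> decimal_rep (B n a b) (nseq n.-1 a ++ [:: b]).
Proof.
move=> /andP [a0 a10] b10 n1; split.
- by rewrite all_cat all_nseq a10 orbT /= b10.
- by case: n n1 => [|[|n]] //= _; rewrite -lt0n.
rewrite fromdigits_cat fromdigits_nseq /B -[in repunit n](ltn_predK n1) -[n.-1.+1]addn1 repunitD.
by rewrite repunit1 /fromdigits /=; lia.
Qed.

Definition Bperm (a b m k : nat) : nat := fromdigits (nseq m a ++ b :: nseq k a).

Lemma Bperm_perm_eq (a b m k : nat) :
  perm_eq (nseq m a ++ b :: nseq k a) (nseq (m + k) a ++ [:: b]).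
Proof. by apply/permP => P; rewrite !count_cat /= !count_nseq; lia. Qed.

(* Moving b to position k changes the value by (b - a)(10^k - 1). *)
Lemma Bperm_value (a b m k : nat) :
  Bperm a b m k + a * 10 ^ k = a * repunit (m + k).+1 + b * 10 ^ k.
Proof.
rewrite /Bperm fromdigits_cat fromdigits_cons !fromdigits_nseq /= size_nseq.
by rewrite -addnS repunitD repunitS expnS; lia.
Qed.

Lemma Bperm_ge_a (a b m k : nat) : 0 < m -> a * 10 ^ (m + k) <= Bperm a b m k.
Proof.
by case: m => // m _; rewrite /Bperm /= fromdigits_cons size_cat /= !size_nseq addnS addSn leq_addr.
Qed.

Lemma Bperm_ge_b (a b m k : nat) : b * 10 ^ k <= Bperm a b m k.
Proof. by rewrite /Bperm fromdigits_cat fromdigits_cons size_nseq; lia. Qed.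

Lemma ltn_pow10_pred (n : nat) : 1 < n -> n < 10 ^ n.-1.
Proof.
case: n => [|[|n]] // _; have := ltn_expl n (isT : 1 < 10).
by rewrite /= expnS; lia.
Qed.

Lemma Bperm_prime (n a b m k : nat) :
  0 < a < 10 -> b < 10 -> 1 < n -> absolute_prime (B n a b) ->
  m + k = n.-1 -> prime (Bperm a b m k).
Proof.
move=> ha hb hn [s [reps perm_prime]] mk; apply: perm_prime.
by rewrite (decimal_rep_uniq reps (decimal_rep_B ha hb hn)) -mk Bperm_perm_eq.
Qed.

Lemma prime_last_digit_odd (s : seq nat) (x : nat) :
  prime (fromdigits (rcons s x)) -> 2 < fromdigits (rcons s x) -> odd x.
Proof.
move=> pr gt2; have [e|] := even_prime pr; first by rewrite e in gt2.
by rewrite fromdigits_rcons oddD oddM andbF.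
Qed.

(* Both digits of an absolute prime B_n(a,b) are odd: some permutation ends in
   b and another ends in a. *)
Lemma B_digits_odd (n a b : nat) :
  0 < a < 10 -> b < 10 -> 1 < n -> absolute_prime (B n a b) -> odd a /\ odd b.
Proof.
move=> ha hb hn abs; have [a0 _] := andP ha.
have [n' en] : exists n', n.-1 = n'.+1 by exists n.-2; case: n hn {abs} => [|[|]].
have ob : odd b.
  have pr := Bperm_prime ha hb hn abs (addn0 n.-1).
  have ge := Bperm_ge_a a b 0 (ltn0Sn n').
  move: pr ge; rewrite en addn0 /Bperm cats1 => pr ge.
  by apply: prime_last_digit_odd pr _; rewrite expnS in ge; nia.
split=> //.
have pr := Bperm_prime ha hb hn abs (add0n n.-1).
have ge := Bperm_ge_b a b 0 n.-1.
have nseqSr : nseq n'.+1 a = rcons (nseq n' a) a by elim: (n') => //= j ->.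
move: pr ge; rewrite en /Bperm nseqSr -rcons_cons cat0s => pr ge.
have b0 : 0 < b by rewrite lt0n; apply: contraTneq ob => ->.
by apply: prime_last_digit_odd pr _; rewrite expnS in ge; nia.
Qed.

(* Two distinct odd digits remain distinct modulo any prime other than 2, 3, 5:
   for p > 9 this is clear, and for p = 7 the odd digits differ by an even
   number less than 10. *)
Lemma odd_digits_neq_mod (a b p : nat) :
  a < 10 -> b < 10 -> a != b -> odd a -> odd b ->
  prime p -> p != 2 -> p != 3 -> p != 5 -> a %% p != b %% p.
Proof.
move=> a10 b10 ab oa ob pr p2 p3 p5; have [p10|p10] := leqP 10 p.
  by rewrite !modn_small // (leq_trans _ p10).
have -> : p = 7.
  by move: pr p2 p3 p5 p10; case: p => [|[|[|[|[|[|[|[|[|[|]]]]]]]]]].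
by move: a10 b10 ab oa ob; case: a => [|[|[|[|[|[|[|[|[|[|]]]]]]]]]];
  case: b => [|[|[|[|[|[|[|[|[|[|]]]]]]]]]].
Qed.

(* 10 has order 1 modulo 3, so 3 is never a prime for which 10 is a
   primitive root. *)
Lemma order10_ne3 (p : nat) : is_order10 p p.-1 -> p != 3.
Proof. by case=> _ _ min; apply/eqP => p3; move: (min 1); rewrite p3 => /(_ isT). Qed.

Import GRing.Theory.

Section RootsOfUnity.
Local Open Scope ring_scope.

Lemma expf_card_pred (F : finFieldType) (x : F) : x != 0 -> x ^+ #|F|.-1 = 1.
Proof.
move=> x0; have F0 : (0 < #|F|)%N by apply/card_gt0P; exists 0.
by apply: (mulfI x0); rewrite -exprS prednK // mulr1 expf_card.
Qed.

(* A primitive (#|F|-1)-th root of unity z generates the multiplicative group,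
   so u + v z^k = 0 is solvable with k < #|F|-1 as soon as u, v are nonzero. *)
Lemma prim_root_affine_zero (F : finFieldType) (z u v : F) :
  #|F|.-1.-primitive_root z -> u != 0 -> v != 0 ->
  exists2 k, (k < #|F|.-1)%N & u + v * z ^+ k = 0.
Proof.
move=> prim u0 v0; have x0 : - u / v != 0 by rewrite mulf_neq0 ?oppr_eq0 ?invr_eq0.
have [k ek] := prim_rootP prim (expf_card_pred x0).
by exists k; rewrite // -ek mulrCA divff // mulr1 subrr.
Qed.

(* If 10 is a primitive m-th root of unity in R and m does not divide n, then
   the repunit A_n does not vanish in R, since 9 A_n = 10^n - 1. *)
Lemma repunit_neq0 (R : nzRingType) (m n : nat) :
  m.-primitive_root (10%:R : R) -> ~~ (m %| n)%N -> (repunit n)%:R != 0 :> R.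
Proof.
move=> prim; apply: contraNneq => A0.
by rewrite (prim_order_dvd prim) -natrX -repunit9 natrD natrM A0 mulr0 add0r.
Qed.

Lemma Fp_nat_eq (p m k : nat) :
  prime p -> ((m%:R : 'F_p) == k%:R) = (m %% p == k %% p)%N.
Proof. by move=> pr; rewrite -val_eqE /= !val_Fp_nat. Qed.

Lemma order10_prim_root (p : nat) :
  prime p -> is_order10 p p.-1 -> p.-1.-primitive_root (10%:R : 'F_p).
Proof.
move=> pr [pos ord1 min].
have ord1F : (10%:R : 'F_p) ^+ p.-1 = 1 by apply/eqP; rewrite -natrX (@Fp_nat_eq _ _ 1 pr) ord1.
have [m prim mdiv] := prim_order_exists pos ord1F.
suff -> : p.-1 = m by [].
apply/eqP; rewrite eqn_leq (dvdn_leq pos mdiv) andbT leqNgt; apply/negP => mp.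
have := min m; rewrite (prim_order_gt0 prim) mp => /(_ isT); apply/negP/negPn.
by rewrite -(@Fp_nat_eq _ _ 1 pr) natrX (prim_expr_order prim).
Qed.

Lemma Bperm_dvd (p a b m k : nat) : prime p ->
  a%:R * (repunit (m + k).+1)%:R + (b%:R - a%:R) * 10%:R ^+ k = 0 :> 'F_p ->
  (p %| Bperm a b m k)%N.
Proof.
move=> pr root; rewrite (dvdn_pcharf (pchar_Fp pr)).
have := congr1 (fun x => x%:R : 'F_p) (Bperm_value a b m k).
rewrite /= !natrD !natrM natrX => e.
by apply/eqP; apply: (addIr (a%:R * 10%:R ^+ k)); rewrite e -root; ring.
Qed.
End RootsOfUnity.

Theorem lemma6 (a b n p : nat) :
  a < 10 -> b < 10 -> a != b -> 2 <= n ->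
  absolute_prime (B n a b) ->
  prime p -> p != 2 -> p != 5 ->
  p.-1 < n ->
  is_order10 p p.-1 ->
  coprime a p ->
  p.-1 %| n.
Proof.
move=> a10 b10 ab n2 absB pr p2 p5 pn ord cop; apply: contraT => ndiv.
have pa : ~~ (p %| a) by rewrite -prime_coprime // coprime_sym.
have ha : 0 < a < 10 by rewrite a10 andbT lt0n; apply: contraNneq _ pa => ->.
have [oa ob] := B_digits_odd ha b10 n2 absB.
have prim := order10_prim_root pr ord.
have u0 : (a%:R * (repunit n)%:R : 'F_p)%R != 0%R.
  by rewrite GRing.mulf_neq0 ?(repunit_neq0 prim) // -(dvdn_pcharf (pchar_Fp pr)).
have v0 : (b%:R - a%:R : 'F_p)%R != 0%R.
  by rewrite GRing.subr_eq0 Fp_nat_eq // eq_sym odd_digits_neq_mod ?order10_ne3.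
have [k kp root] : exists2 k, k < p.-1 &
    (a%:R * (repunit n)%:R + (b%:R - a%:R) * 10%:R ^+ k = 0 :> 'F_p)%R.
  by have := prim_root_affine_zero (F := 'F_p) _ u0 v0; rewrite card_Fp //; apply.
have kn : k < n.-1 by lia.
have mk : n.-1 - k + k = n.-1 by rewrite subnK // ltnW.
rewrite -[in repunit n](ltn_predK n2) -mk in root.
have pB : p = Bperm a b (n.-1 - k) k.
  by apply/eqP; rewrite -dvdn_prime2 ?(Bperm_prime ha b10 n2 absB mk) ?(Bperm_dvd pr root).
have := Bperm_ge_a a b k (_ : 0 < n.-1 - k); rewrite subn_gt0 mk -pB => /(_ kn).
have := ltn_pow10_pred n2; nia.
Qed.
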